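(* If $S$ is a finite GCD closed set of positive integers and every element of $S$ generates a double-chain set in $S$, then the LCM matrix $[S]$ is invertible.
   Context: All order notions are with respect to divisibility, with meet $\gcd$; $S$ is GCD closed if $\gcd(x,y)\in S$ for all $x,y\in S$. The LCM matrix $[S]$ of $S=\{x_1,\dots,x_n\}$ has $(i,j)$ entry $\mathrm{lcm}(x_i,x_j)$. $C_S(x)$ is the set of elements of $S$ covered by $x$ in $(S,\mid)$; $\mathrm{meetcl}(C)$ is the set of gcds of all nonempty finite subsets of $C$. An element $x\in S$ generates a double-chain set in $S$ if $\mathrm{meetcl}(C_S(x))\setminus C_S(x)$ is a union of two disjoint (possibly empty) chains under divisibility. *)

From HB Require Import structures.
From mathcomp Require Import all_boot all_order all_algebra.
Set Implicit Arguments. Unset Strict Implicit. Unset Printing Implicit Defensive.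

(* A finite set S of positive integers is represented by a duplicate-free
   sequence S : seq nat (its order fixes the enumeration x_1, ..., x_n). *)

Definition gcd_closed (S : seq nat) : Prop :=
  forall x y, x \in S -> y \in S -> gcdn x y \in S.

Definition covers (S : seq nat) (x y : nat) : Prop :=
  [/\ x \in S, y \in S, y %| x, y != x &
      forall z, z \in S -> y %| z -> z %| x -> z = y \/ z = x].

Definition CS (S : seq nat) (x : nat) : nat -> Prop := fun y => covers S x y.

Definition meetcl (C : nat -> Prop) : nat -> Prop := fun d =>
  exists t : seq nat, [/\ t != [::], (forall c, c \in t -> C c) &
                          d = foldr gcdn 0 t].

Definition dvd_chain (A : nat -> Prop) : Prop :=
  forall a b, A a -> A b -> (a %| b) || (b %| a).

Definition double_chain_gen (S : seq nat) (x : nat) : Prop :=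
  exists A B : nat -> Prop,
    [/\ dvd_chain A, dvd_chain B, (forall d, A d -> B d -> False) &
        forall d, (meetcl (CS S x) d /\ ~ CS S x d) <-> (A d \/ B d)].

Definition lcm_matrix (S : seq nat) : 'M[rat]_(size S) :=
  \matrix_(i < size S, j < size S) ((lcmn (nth 0 S i) (nth 0 S j))%:R)%R.

From HB Require Import structures.
From mathcomp Require Import all_boot all_order all_algebra.
From mathcomp Require Import zify lra.
Set Implicit Arguments. Unset Strict Implicit. Unset Printing Implicit Defensive.
Import Order.TTheory GRing.Theory Num.Theory.

(* Let h be the Moebius inversion of x |-> 1/x over (S, |), so that 1/n is the sum of h z over
   the z in S dividing n.  As S is GCD closed, lcm(a, b) = ab / gcd(a, b) is ab times the sum
   of h z over the common divisors z of a and b in S, so [S] = D E diag(h) E^T D with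
   D = diag(x_i) and E the unitriangular divisibility matrix of S; hence [S] is invertible iff
   h never vanishes.  Sieving the divisors of x by its lower covers C gives h x = sieve x C,
   where sieve x (y :: C) = sieve x C - sieve (gcd x y) C.  The double-chain hypothesis yields
   a cover y whose gcds with the other covers C' form a chain with top m < y, so that
   h x = sieve x C' - (1/y - 1/m).  By induction on |C|, h x < 0 when x has one lower cover and
   h x > 0 otherwise (for two covers y, z because 1/y + 1/z <= 1/gcd(y, z)). *)

Lemma dvd_chain_max (f : nat -> nat) (C : seq nat) : C != [::] ->
  {in C &, forall a b, (f a %| f b) || (f b %| f a)} ->
  exists2 t0, t0 \in C & {in C, forall t, f t %| f t0}.
Proof.
elim: C => [//|a C IH] _ chain_aC.
have chainC : {in C &, forall s t, (f s %| f t) || (f t %| f s)}.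
  by move=> s t sC tC; apply: chain_aC; rewrite inE ?sC ?tC orbT.
have [->|/IH/(_ chainC)[t0 t0C t0_max]] := eqVneq C [::].
  by exists a => [|t]; rewrite ?mem_head // inE => /eqP->.
have t0_aC : t0 \in a :: C by rewrite inE t0C orbT.
case/orP: (chain_aC a t0 (mem_head _ _) t0_aC) => [a_t0|t0_a].
  by exists t0 => // t; rewrite inE => /predU1P[->|/t0_max].
exists a; first exact: mem_head.
by move=> t; rewrite inE => /predU1P[->//|/t0_max t_t0]; apply: dvdn_trans t_t0 t0_a.
Qed.

Definition dvd_antichain (C : seq nat) : Prop :=
  {in C &, forall y z, y %| z -> y = z}.

Definition gcd_double_chain (C : seq nat) : Prop :=
  exists A B : nat -> Prop,
    [/\ dvd_chain A, dvd_chain B, (forall d, A d -> B d -> False) &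
        {in C &, forall y z, y != z -> A (gcdn y z) \/ B (gcdn y z)}].

Lemma gcd_double_chain_sub C C' :
  {subset C' <= C} -> gcd_double_chain C -> gcd_double_chain C'.
Proof.
move=> sC'C [A [B [chA chB disjAB coverAB]]]; exists A, B; split=> // y z yC' zC'.
exact: coverAB (sC'C y yC') (sC'C z zC').
Qed.

Definition gcd_pivot (C : seq nat) (y : nat) : bool :=
  all (fun t1 => all (fun t2 =>
    [|| t1 == y, t2 == y, gcdn y t1 %| gcdn y t2 | gcdn y t2 %| gcdn y t1]) C) C.

Lemma gcd_pivotN_split C (A B : nat -> Prop) a : dvd_chain A -> dvd_chain B ->
    {in C &, forall y z, y != z -> A (gcdn y z) \/ B (gcdn y z)} ->
    a \in C -> ~~ gcd_pivot C a ->
  exists t1 t2,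
    [/\ t1 \in C, a != t1 & A (gcdn a t1)] /\ [/\ t2 \in C, a != t2 & B (gcdn a t2)].
Proof.
move=> chA chB coverAB aC /allPn[t1 t1C /allPn[t2 t2C]].
rewrite !negb_or => /and4P[t1Na t2Na t12 t21].
rewrite ![_ == a]eq_sym in t1Na t2Na.
case: (coverAB a t1 aC t1C t1Na) => h1; case: (coverAB a t2 aC t2C t2Na) => h2.
- by have := chA _ _ h1 h2; rewrite (negbTE t12) (negbTE t21).
- by exists t1, t2.
- by exists t2, t1.
- by have := chB _ _ h1 h2; rewrite (negbTE t12) (negbTE t21).
Qed.

Lemma gcd_pivot_exists C : uniq C -> (forall y, y \in C -> 0 < y) ->
  gcd_double_chain C -> 1 < size C -> exists2 y, y \in C & gcd_pivot C y.
Proof.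
move=> Cu Cpos [A [B [chA chB disjAB coverAB]]] C_gt1.
(* Let w = gcd y z be least among gcds of distinct elements.  If neither y nor z is a pivot,
   both A and B contain a gcd dividing y and z, which must be w. *)
pose is_gcd k := has (fun y => has (fun z => (y != z) && (gcdn y z == k)) C) C.
have is_gcdP a b : a \in C -> b \in C -> a != b -> is_gcd (gcdn a b).
  by move=> aC bC ab; apply/hasP; exists a => //; apply/hasP; exists b; rewrite // ab eqxx.
have C_gt0 : 0 < size C by apply: ltnW.
have is_gcd_01 : is_gcd (gcdn (nth 0 C 0) (nth 0 C 1)).
  by apply: is_gcdP; rewrite ?mem_nth ?nth_uniq.
case: (ex_minnP (ex_intro is_gcd _ is_gcd_01)) => w.
case/hasP=> y yC /hasP[z zC /andP[yNz /eqP gcd_yz]] w_min {is_gcd_01}.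
have w_gt0 : 0 < w by rewrite -gcd_yz gcdn_gt0 Cpos.
have gcd_eq_w a b : a \in C -> b \in C -> a != b ->
    gcdn a b %| y -> gcdn a b %| z -> gcdn a b = w.
  move=> aC bC ab g_y g_z; apply/eqP; rewrite eqn_leq w_min ?is_gcdP // andbT.
  by apply: dvdn_leq w_gt0 _; rewrite -gcd_yz dvdn_gcd g_y.
have chain_w (X : nat -> Prop) t s : dvd_chain X -> t \in C -> s \in C ->
    y != t -> z != s -> X (gcdn y t) -> X (gcdn z s) -> X w.
  move=> chX tC sC yNt zNs Xyt Xzs; case/orP: (chX _ _ Xyt Xzs) => [yt_zs|zs_yt].
    rewrite -(gcd_eq_w y t) ?dvdn_gcdl //.
    exact: dvdn_trans yt_zs (dvdn_gcdl z s).
  rewrite -(gcd_eq_w z s) ?dvdn_gcdl //.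
  exact: dvdn_trans zs_yt (dvdn_gcdl y t).
have [y_piv|/(gcd_pivotN_split chA chB coverAB yC)] := boolP (gcd_pivot C y); first by exists y.
move=> [t1 [t2 [[t1C yNt1 At1] [t2C yNt2 Bt2]]]].
have [z_piv|/(gcd_pivotN_split chA chB coverAB zC)] := boolP (gcd_pivot C z); first by exists z.
move=> [s1 [s2 [[s1C zNs1 As1] [s2C zNs2 Bs2]]]].
case: (disjAB w).
  exact: chain_w chA t1C s1C yNt1 zNs1 At1 As1.
exact: chain_w chB t2C s2C yNt2 zNs2 Bt2 Bs2.
Qed.

Definition coversb (S : seq nat) (x y : nat) : bool :=
  [&& x \in S, y \in S, y %| x, y != x &
      all (fun z => (y %| z) && (z %| x) ==> (z == y) || (z == x)) S].

Lemma coversP S x y : reflect (covers S x y) (coversb S x y).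
Proof.
apply: (iffP and5P) => [[xS yS y_x yNx /allP between]|[xS yS y_x yNx between]].
  split=> // z zS y_z z_x.
  have /implyP/(_ (introT andP (conj y_z z_x))) := between z zS.
  by case/orP=> /eqP->; [left|right].
split=> //; apply/allP => z zS; apply/implyP => /andP[y_z z_x].
by case: (between z zS y_z z_x) => ->; rewrite eqxx ?orbT.
Qed.

Definition lower_covers (S : seq nat) (x : nat) : seq nat :=
  [seq y <- S | coversb S x y].

Lemma lower_coversP S x y : reflect (covers S x y) (y \in lower_covers S x).
Proof.
rewrite mem_filter; apply: (iffP andP) => [[/coversP//]|xy].
by split; [apply/coversP | case: xy].
Qed.

Section GcdClosedSet.

Variable S : seq nat.
Hypothesis Spos : forall x, x \in S -> 0 < x.
Hypothesis Sgcd : gcd_closed S.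

Lemma exists_lower_cover z0 z : z0 \in S -> z \in S -> z0 %| z -> z0 != z ->
  exists2 t, covers S z t & z0 %| t.
Proof.
move=> z0S zS z0_z z0Nz.
pose between k := [&& k \in S, z0 %| k, k %| z & k != z].
have between_le k : between k -> k <= z.
  by case/and4P=> _ _ k_z _; apply: dvdn_leq (Spos zS) k_z.
have between_z0 : between z0 by rewrite /between z0S dvdnn z0_z z0Nz.
case: (ex_maxnP (ex_intro between _ between_z0) between_le) => t.
case/and4P=> tS z0_t t_z tNz t_max; exists t => //.
split=> // u uS t_u u_z; have [->|uNz] := eqVneq u z; [by right | left].
apply/eqP; rewrite eqn_leq (dvdn_leq (Spos uS) t_u) andbT t_max //.
by rewrite /between uS (dvdn_trans z0_t t_u) u_z uNz.
Qed.

Lemma least_multiple d k : k \in S -> d %| k ->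
  exists2 z0, z0 \in S & d %| z0 /\ {in S, forall m, d %| m -> z0 %| m}.
Proof.
move=> kS d_k; pose mult k := (k \in S) && (d %| k).
have mult_k : mult k by apply/andP.
case: (ex_minnP (ex_intro mult _ mult_k)) => z0 /andP[z0S d_z0] z0_min.
exists z0 => //; split=> // m mS d_m.
have gS := Sgcd mS z0S.
have /eqP <- : gcdn m z0 == z0.
  by rewrite eqn_leq (dvdn_leq (Spos z0S) (dvdn_gcdr m z0)) z0_min // /mult gS dvdn_gcd d_m.
exact: dvdn_gcdl.
Qed.

Lemma lower_covers_multipleP d z : z \in S -> d %| z ->
  reflect {in S, forall k, d %| k -> z %| k} (~~ has (dvdn d) (lower_covers S z)).
Proof.
move=> zS d_z; apply: (iffP hasPn) => [no_cover k kS d_k | z_least t].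
  have gS := Sgcd zS kS; have [g_z|gNz] := eqVneq (gcdn z k) z.
    by rewrite -g_z dvdn_gcdr.
  have [t /lower_coversP t_cov g_t] := exists_lower_cover gS zS (dvdn_gcdl z k) gNz.
  by have := no_cover t t_cov; rewrite (dvdn_trans _ g_t) // dvdn_gcd d_z.
move=> /lower_coversP[_ tS t_z tNz _]; apply/negP => d_t.
by move: tNz; rewrite eqn_dvd t_z z_least.
Qed.

End GcdClosedSet.

Local Open Scope ring_scope.

(* [recip_moebius] is the Dirichlet convolution of the Moebius function with n |-> 1/n, see
   [sum_recip_moebius]; [recip_moebius_rec k n] is only meaningful when n < k. *)
Fixpoint recip_moebius_rec (k n : nat) : rat :=
  if k is k'.+1 then
    n%:R^-1 - \sum_(d <- divisors n | (d < n)%N) recip_moebius_rec k' d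
  else 0.

Definition recip_moebius (n : nat) : rat := recip_moebius_rec n.+1 n.

Lemma recip_moebius_rec_fuel k1 k2 n : (n < k1)%N -> (n < k2)%N ->
  recip_moebius_rec k1 n = recip_moebius_rec k2 n.
Proof.
elim: k1 k2 n => [//|k1 IH] [//|k2] n n_lt1 n_lt2.
rewrite /recip_moebius_rec -/recip_moebius_rec.
rewrite [in LHS]big_seq_cond [in RHS]big_seq_cond.
by rewrite (eq_bigr (recip_moebius_rec k2)) // => d /andP[_ d_lt_n]; apply: IH; lia.
Qed.

Lemma recip_moebiusE n :
  recip_moebius n = n%:R^-1 - \sum_(d <- divisors n | (d < n)%N) recip_moebius d.
Proof.
rewrite {1}/recip_moebius /recip_moebius_rec -/recip_moebius_rec.
rewrite [in LHS]big_seq_cond [in RHS]big_seq_cond.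
by rewrite (eq_bigr recip_moebius) // => d /andP[_ d_lt_n]; apply: recip_moebius_rec_fuel.
Qed.

Lemma sum_recip_moebius n : (0 < n)%N ->
  \sum_(d <- divisors n) recip_moebius d = n%:R^-1.
Proof.
move=> n_gt0; rewrite (bigD1_seq n (divisors_id n_gt0) (divisors_uniq n)).
have -> : \sum_(d <- divisors n | d != n) recip_moebius d
        = \sum_(d <- divisors n | (d < n)%N) recip_moebius d.
  rewrite [in LHS]big_seq_cond [in RHS]big_seq_cond; apply: eq_bigl => d.
  rewrite -dvdn_divisors // ltn_neqAle.
  by case d_n: (d %| n)%N; rewrite ?(dvdn_leq n_gt0 d_n) ?andbT.
by rewrite recip_moebiusE; apply: subrK.
Qed.

Lemma big_divisors_dvdn (V : nmodType) m n (P : pred nat) (F : nat -> V) :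
  (0 < m)%N -> (n %| m)%N ->
  \sum_(d <- divisors n | P d) F d = \sum_(d <- divisors m | (d %| n)%N && P d) F d.
Proof.
move=> m_gt0 n_m; have n_gt0 := dvdn_gt0 m_gt0 n_m.
rewrite -big_filter_cond; apply/perm_big/uniq_perm.
- exact: divisors_uniq.
- exact/filter_uniq/divisors_uniq.
move=> d; rewrite mem_filter -!dvdn_divisors //.
by apply/idP/andP => [d_n|[]//]; rewrite d_n (dvdn_trans d_n n_m).
Qed.

(* By [sieve_cons], [sieve x C] is the inclusion-exclusion sum of (-1)^|T| / gcd(x, T) over
   the subsets T of C. *)
Definition sieve (x : nat) (C : seq nat) : rat :=
  \sum_(d <- divisors x | ~~ has (dvdn d) C) recip_moebius d.

Lemma sieve_nil x : (0 < x)%N -> sieve x [::] = x%:R^-1.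
Proof. exact: sum_recip_moebius. Qed.

Lemma eq_sieve x C C' : C =i C' -> sieve x C = sieve x C'.
Proof. by move=> eqC; apply: eq_bigl => d; rewrite (eq_has_r eqC). Qed.

Lemma sieve_cons x y C : (0 < x)%N ->
  sieve x (y :: C) = sieve x C - sieve (gcdn x y) C.
Proof.
move=> x_gt0; apply/eqP; rewrite eq_sym subr_eq; apply/eqP.
rewrite [sieve x C](bigID (dvdn^~ y)) addrC; congr (_ + _); last first.
  by apply: eq_bigl => d; rewrite /= negb_or andbC.
rewrite /sieve (big_divisors_dvdn _ _ x_gt0 (dvdn_gcdl x y)).
rewrite [in LHS]big_seq_cond [in RHS]big_seq_cond; apply: eq_bigl => d.
rewrite -dvdn_divisors // dvdn_gcd.
by case: (d %| x)%N; case: (d %| y)%N; case: has.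
Qed.

Lemma ltr_natV (a b : nat) : (0 < a)%N -> (a < b)%N -> b%:R^-1 < a%:R^-1 :> rat.
Proof.
move=> a_gt0 a_lt_b; have b_gt0 : (0 < b)%N by apply: leq_trans a_lt_b.
by rewrite ltf_pV2 ?ltr_nat // posrE ltr0n.
Qed.

Lemma proper_dvdn_natV (d n : nat) : (0 < n)%N -> (d %| n)%N -> d != n ->
  n%:R^-1 <= d%:R^-1 / 2 :> rat.
Proof.
move=> n_gt0 /dvdnP[k n_eq] dNn; subst n.
have d_gt0 : (0 < d)%N by move: n_gt0; rewrite muln_gt0 => /andP[].
have k_ge2 : (2 <= k)%N.
  by case: k n_gt0 dNn => [|[|k]] //; rewrite mul1n eqxx.
rewrite -invfM -natrM lef_pV2 ?posrE ?ltr0n ?muln_gt0 ?d_gt0 ?andbT //.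
  by rewrite ler_nat mulnC leq_mul2r k_ge2 orbT.
exact: leq_trans k_ge2.
Qed.

Lemma sieve_chain_lt0 y C : (0 < y)%N -> C != [::] ->
  {in C, forall t, ~~ (y %| t)%N} ->
  {in C &, forall t1 t2, (gcdn y t1 %| gcdn y t2)%N || (gcdn y t2 %| gcdn y t1)%N} ->
  sieve y C < 0.
Proof.
move=> y_gt0 CN0 yNdvd chainC.
have [t0 t0C t0_max] := dvd_chain_max CN0 chainC.
have -> : sieve y C = sieve y [:: t0].
  rewrite /sieve [in LHS]big_seq_cond [in RHS]big_seq_cond; apply: eq_bigl => d.
  rewrite -dvdn_divisors //=; case d_y: (d %| y)%N => //=; rewrite orbF.
  congr (~~ _); apply/hasP/idP => [[t tC d_t]|d_t0]; last by exists t0.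
  apply: dvdn_trans (dvdn_gcdr y t0); apply: dvdn_trans (t0_max t tC).
  by rewrite dvdn_gcd d_y.
have g_gt0 : (0 < gcdn y t0)%N by rewrite gcdn_gt0 y_gt0.
rewrite sieve_cons // !sieve_nil // subr_lt0 ltr_natV //.
rewrite ltn_neqAle dvdn_leq ?dvdn_gcdl // andbT.
by apply: contraNneq (yNdvd t0 t0C) => <-; apply: dvdn_gcdr.
Qed.

Lemma sieve_pair_gt0 x y z : (0 < x)%N -> (y %| x)%N -> (z %| x)%N ->
  ~~ (y %| z)%N -> ~~ (z %| y)%N -> 0 < sieve x [:: y; z].
Proof.
move=> x_gt0 y_x z_x yNz zNy.
have y_gt0 := dvdn_gt0 x_gt0 y_x; have z_gt0 := dvdn_gt0 x_gt0 z_x.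
have g_gt0 : (0 < gcdn y z)%N by rewrite gcdn_gt0 y_gt0.
rewrite !sieve_cons ?gcdn_gt0 ?x_gt0 // (gcdn_idPr y_x) (gcdn_idPr z_x) !sieve_nil //.
have gNy : gcdn y z != y by apply: contraNneq yNz => <-; apply: dvdn_gcdr.
have gNz : gcdn y z != z by apply: contraNneq zNy => <-; apply: dvdn_gcdl.
have := proper_dvdn_natV y_gt0 (dvdn_gcdl y z) gNy.
have := proper_dvdn_natV z_gt0 (dvdn_gcdr y z) gNz.
have : 0 < x%:R^-1 :> rat by rewrite invr_gt0 ltr0n.
lra.
Qed.

Lemma sieve_rem_pivot_lt0 y C : (0 < y)%N -> uniq C -> dvd_antichain C -> y \in C ->
  gcd_pivot C y -> (1 < size C)%N -> sieve y (rem y C) < 0.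
Proof.
move=> y_gt0 Cu Canti yC y_pivot C_gt1.
have memC' t : (t \in rem y C) = (t != y) && (t \in C) by apply: mem_rem_uniq.
apply: sieve_chain_lt0 => //.
- by rewrite -size_eq0 size_rem //; lia.
- move=> t; rewrite memC' => /andP[tNy tC]; apply: contra tNy => y_t.
  by rewrite (Canti _ _ yC tC y_t).
move=> t1 t2; rewrite !memC' => /andP[t1Ny t1C] /andP[t2Ny t2C].
have := allP (allP y_pivot t1 t1C) t2 t2C.
by rewrite (negbTE t1Ny) (negbTE t2Ny).
Qed.

Lemma sieve_sign x C : (0 < x)%N -> uniq C ->
  {in C, forall y, (y %| x)%N && (y != x)} -> dvd_antichain C -> gcd_double_chain C ->
  if size C == 1%N then sieve x C < 0 else 0 < sieve x C.
Proof.
move=> x_gt0; have [n] := ubnP (size C); elim: n C => // n IH C.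
rewrite ltnS => size_C Cu C_proper Canti Cdc.
have Cpos y : y \in C -> (0 < y)%N.
  by case/C_proper/andP => y_x _; apply: dvdn_gt0 x_gt0 y_x.
have [size_ge3|size_le2] := leqP 3 (size C).
  rewrite gtn_eqF 1?ltnW //.
  have [y0 y0C y0_pivot] := gcd_pivot_exists Cu Cpos Cdc (ltnW size_ge3).
  have /andP[y0_x _] := C_proper y0 y0C.
  have sub_C'C : {subset rem y0 C <= C} := mem_rem (s := C).
  have size_C'_lt : (size (rem y0 C) < n)%N by rewrite size_rem //; lia.
  rewrite (eq_sieve x (perm_mem (perm_to_rem y0C))) sieve_cons // (gcdn_idPr y0_x).
  have := IH _ size_C'_lt (rem_uniq y0 Cu) (sub_in1 sub_C'C C_proper)
    (sub_in2 sub_C'C Canti) (gcd_double_chain_sub sub_C'C Cdc).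
  rewrite size_rem // ifN_eq; last by lia.
  have := sieve_rem_pivot_lt0 (Cpos y0 y0C) Cu Canti y0C y0_pivot (ltnW size_ge3).
  lra.
case: C size_C Cu C_proper Canti Cdc Cpos size_le2 => [|y [|z [|? ?]]] //= _.
- by rewrite sieve_nil // invr_gt0 ltr0n.
- move=> _ C_proper _ _ Cpos _; have /andP[y_x yNx] := C_proper y (mem_head _ _).
  rewrite sieve_cons // sieve_nil // (gcdn_idPr y_x) sieve_nil ?Cpos ?mem_head //.
  by rewrite subr_lt0 ltr_natV ?Cpos ?mem_head // ltn_neqAle yNx dvdn_leq.
move=> /andP[yNz _] C_proper Canti _ Cpos _.
have yC : y \in [:: y; z] by rewrite mem_head.
have zC : z \in [:: y; z] by rewrite !inE eqxx orbT.
have /andP[y_x _] := C_proper y yC; have /andP[z_x _] := C_proper z zC.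
rewrite inE in yNz.
apply: sieve_pair_gt0 => //.
  by apply: contra yNz => y_z; rewrite (Canti y z yC zC y_z).
by apply: contra yNz => z_y; rewrite (Canti z y zC yC z_y).
Qed.

Definition moebius_weight (S : seq nat) (x : nat) : rat :=
  sieve x (lower_covers S x).

Section MoebiusWeight.

Variable S : seq nat.
Hypothesis Suniq : uniq S.
Hypothesis Spos : forall x, x \in S -> (0 < x)%N.
Hypothesis Sgcd : gcd_closed S.

Lemma sum_moebius_weight n : n \in S ->
  \sum_(z <- S | (z %| n)%N) moebius_weight S z = n%:R^-1.
Proof.
move=> nS; have n_gt0 := Spos nS; rewrite -(sum_recip_moebius n_gt0).
under eq_bigr => z z_n do
  rewrite /moebius_weight /sieve (big_divisors_dvdn _ _ n_gt0 z_n) big_mkcond.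
rewrite exchange_big /=; apply: eq_big_seq => d.
rewrite -dvdn_divisors // => d_n.
have [z0 z0S [d_z0 z0_least]] := least_multiple Spos Sgcd nS d_n.
have cover_free z : z \in S ->
    (z %| n)%N && ((d %| z)%N && ~~ has (dvdn d) (lower_covers S z)) = (z == z0).
  move=> zS; apply/idP/eqP => [|->].
    case/and3P=> _ d_z /(lower_covers_multipleP Spos Sgcd zS d_z) z_least.
    by apply/eqP; rewrite eqn_dvd z_least // z0_least.
  by rewrite z0_least // d_z0; apply/(lower_covers_multipleP Spos Sgcd z0S d_z0).
rewrite -big_mkcondr big_seq_cond (eq_bigl (pred1 z0)) => [|z /=]; last first.
  have [zS|zNS] := boolP (z \in S); first exact: cover_free.
  by apply/esym/eqP => z_z0; rewrite z_z0 z0S in zNS.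
by rewrite -big_filter filter_pred1_uniq // big_seq1.
Qed.

Lemma lower_covers_antichain x : dvd_antichain (lower_covers S x).
Proof.
move=> y z /lower_coversP[_ _ _ _ y_between] /lower_coversP[_ zS z_x zNx _] y_z.
by case: (y_between z zS y_z z_x) => [//|z_eq]; rewrite z_eq eqxx in zNx.
Qed.

Lemma lower_covers_gcd_double_chain x :
  double_chain_gen S x -> gcd_double_chain (lower_covers S x).
Proof.
case=> A [B [chA chB disjAB AB_eq]]; exists A, B; split=> // y z yC zC yNz.
have [_ yS y_x yNx y_between] := lower_coversP _ _ _ yC.
have [_ zS z_x zNx z_between] := lower_coversP _ _ _ zC.
apply/AB_eq; split.
  exists [:: y; z]; split=> //=; last by rewrite gcdn0.
  by move=> c; rewrite !inE => /orP[]/eqP->; apply/lower_coversP.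
case=> _ _ _ _ g_between.
have [y_eq|y_eq] := g_between y yS (dvdn_gcdl y z) y_x; last by rewrite y_eq eqxx in yNx.
have y_z : (y %| z)%N by rewrite y_eq dvdn_gcdr.
have [z_eq|z_eq] := y_between z zS y_z z_x; last by rewrite z_eq eqxx in zNx.
by rewrite z_eq eqxx in yNz.
Qed.

Lemma moebius_weight_neq0 x : x \in S -> double_chain_gen S x -> moebius_weight S x != 0.
Proof.
move=> xS x_dc; have proper y : y \in lower_covers S x -> (y %| x)%N && (y != x).
  by case/lower_coversP=> _ _ -> ->.
have := sieve_sign (Spos xS) (filter_uniq _ Suniq) proper (@lower_covers_antichain x)
  (lower_covers_gcd_double_chain x_dc).
by case: ifP => _ sign; rewrite /moebius_weight ?(lt_eqF sign) ?(gt_eqF sign).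
Qed.

Lemma lcmn_moebius_weight a b : a \in S -> b \in S ->
  (lcmn a b)%:R = a%:R * b%:R * \sum_(z <- S | (z %| a)%N && (z %| b)%N) moebius_weight S z.
Proof.
move=> aS bS; under eq_bigl => z do rewrite -dvdn_gcd.
have g_neq0 : (gcdn a b)%:R != 0 :> rat by rewrite pnatr_eq0 -lt0n gcdn_gt0 Spos.
by rewrite sum_moebius_weight ?Sgcd // -natrM -muln_lcm_gcd natrM mulfK.
Qed.

End MoebiusWeight.

Lemma diag_mx_unit (F : fieldType) n (d : 'rV[F]_n) :
  (forall i, d 0 i != 0) -> diag_mx d \in unitmx.
Proof.
by move=> d_neq0; rewrite unitmxE det_diag unitfE; apply/prodf_neq0.
Qed.

Lemma divisor_sums_eq0 (I : finType) (V : nmodType) (s : I -> nat) (u : I -> V) :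
  injective s -> (forall k, (0 < s k)%N) ->
  (forall j, \sum_(k | (s k %| s j)%N) u k = 0) -> forall k, u k = 0.
Proof.
move=> s_inj s_gt0 sums_eq0 k; have [n] := ubnP (s k); elim: n k => // n IH k.
rewrite ltnS => sk_le; have := sums_eq0 k; rewrite (bigD1 k) ?dvdnn //= big1 ?addr0 //.
move=> j /andP[sj_sk jNk]; apply: IH; apply: leq_trans sk_le.
rewrite ltn_neqAle dvdn_leq // andbT; apply: contra jNk => /eqP sj_eq.
by rewrite (s_inj _ _ sj_eq).
Qed.

Definition divisor_matrix (S : seq nat) : 'M[rat]_(size S) :=
  \matrix_(i, k) (nth 0%N S k %| nth 0%N S i)%N%:R.

Lemma divisor_matrix_unit S : uniq S -> (forall x, x \in S -> (0 < x)%N) ->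
  divisor_matrix S \in unitmx.
Proof.
move=> Suniq Spos; rewrite -unitmx_tr unitmxE unitfE; apply/negP => /det0P[v vN0 vE].
have s_inj : injective (fun k : 'I_(size S) => nth 0%N S k).
  by move=> i j /eqP; rewrite nth_uniq // => /eqP/val_inj.
case/negP: vN0; apply/eqP/rowP => k; rewrite mxE.
apply: (divisor_sums_eq0 (u := v 0) s_inj) => [i|j]; first exact/Spos/mem_nth.
transitivity ((v *m (divisor_matrix S)^T) 0 j); last by rewrite vE mxE.
rewrite mxE big_mkcond; apply: eq_bigr => i _.
by rewrite !mxE; case: dvdn; rewrite ?mulr1 ?mulr0.
Qed.

Section LcmMatrixFactor.

Variable S : seq nat.
Hypothesis Suniq : uniq S.
Hypothesis Spos : forall x, x \in S -> (0 < x)%N.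
Hypothesis Sgcd : gcd_closed S.

Let D : 'M[rat]_(size S) := diag_mx (\row_i (nth 0%N S i)%:R).
Let W : 'M[rat]_(size S) := diag_mx (\row_k moebius_weight S (nth 0%N S k)).
Let E := divisor_matrix S.

Lemma lcm_matrix_factor : lcm_matrix S = D *m (E *m W *m E^T) *m D.
Proof.
apply/matrixP => i j; rewrite mul_mx_diag mul_diag_mx !mxE.
rewrite (lcmn_moebius_weight Suniq Spos Sgcd) ?mem_nth // (big_nth 0%N) big_mkord big_mkcond.
rewrite [RHS]mulrAC; congr (_ * _); apply: eq_bigr => k _.
rewrite mul_mx_diag !mxE.
by case: (nth 0%N S k %| nth 0%N S i)%N; case: (nth 0%N S k %| nth 0%N S j)%N;
  rewrite /= ?mulr1 ?mul1r ?mulr0 ?mul0r.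
Qed.

End LcmMatrixFactor.

Local Close Scope ring_scope.

Theorem corollary4p3 (S : seq nat) (Suniq : uniq S)
  (Spos : forall x, x \in S -> 0 < x) (Sgcd : gcd_closed S)
  (Hdc : forall x, x \in S -> double_chain_gen S x) :
  lcm_matrix S \in unitmx.
Proof.
have S_nth (i : 'I_(size S)) : nth 0 S i \in S by apply: mem_nth.
rewrite (lcm_matrix_factor Suniq Spos Sgcd) !unitmx_mul unitmx_tr.
rewrite divisor_matrix_unit // !diag_mx_unit // => i; rewrite mxE.
- exact: moebius_weight_neq0 (S_nth i) (Hdc _ (S_nth i)).
- by rewrite pnatr_eq0 -lt0n Spos.
Qed.
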